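(* For $n\ge2$, the family $\mathcal{K}_n$ consists of exactly $2^{\frac{(n-1)(n-2)}{2}}$ Bieberbach groups, and these groups are pairwise nonisomorphic.
   Context: Let $e_1,\dots,e_n$ be the canonical basis of $\mathbb{R}^n$. For $1\le i\le n-1$ let $C_i$ be the diagonal matrix with $-1$ in position $i$ and $1$ elsewhere, and $c_i=\tfrac12e_{i+1}+\sum_{j=1}^{i-1}c_{ji}e_j$ with $c_{ji}\in\{0,\tfrac12\}$. $\mathcal{K}_n$ is the set of subgroups of the Euclidean isometry group $I(\mathbb{R}^n)$ generated by $\{C_iL_{c_i}:1\le i\le n-1\}\cup\{L_{e_j}:1\le j\le n\}$, one for each choice of the parameters $c_{ji}$, $1\le j<i\le n-1$ (here $BL_b$ is $x\mapsto B(x+b)$). A Bieberbach group is a discrete, cocompact, torsion-free subgroup of $I(\mathbb{R}^n)$. *)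

From HB Require Import structures.
From mathcomp Require Import all_boot all_order all_algebra.
From mathcomp Require Import reals.
Set Implicit Arguments. Unset Strict Implicit. Unset Printing Implicit Defensive.
Import Order.TTheory GRing.Theory Num.Theory.
Local Open Scope ring_scope.

Section Defs.
Variables (R : realType) (n : nat).

(* An affine map x |-> A x + t of R^n (column vectors), encoded as (A, t). *)
Definition aff := ('M[R]_n * 'cV[R]_n)%type.

Definition aff_act (g : aff) (x : 'cV[R]_n) : 'cV[R]_n := g.1 *m x + g.2.
Definition aff_id : aff := (1%:M, 0).
(* composition: (aff_mul g h) x = g (h x) *)
Definition aff_mul (g h : aff) : aff := (g.1 *m h.1, g.1 *m h.2 + g.2).
Definition aff_inv (g : aff) : aff := (invmx g.1, - (invmx g.1 *m g.2)).
Definition aff_pow (g : aff) (k : nat) : aff := iter k (aff_mul g) aff_id.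

(* Elements of I(R^n): A orthogonal (every Euclidean isometry is of this form). *)
Definition is_isometry (g : aff) : Prop := g.1^T *m g.1 = 1%:M.

(* L_b : x |-> x + b ;  B L_b : x |-> B (x + b) = B x + B b *)
Definition transl (b : 'cV[R]_n) : aff := (1%:M, b).
Definition lin_transl (B : 'M[R]_n) (b : 'cV[R]_n) : aff := (B, B *m b).

Definition sqnorm (x : 'cV[R]_n) : R := \sum_k (x k 0) ^+ 2.

Inductive generated (S : aff -> Prop) : aff -> Prop :=
  | gen_base g : S g -> generated S g
  | gen_id : generated S aff_id
  | gen_mul g h : generated S g -> generated S h -> generated S (aff_mul g h)
  | gen_inv g : generated S g -> generated S (aff_inv g).

(* discrete: the identity is isolated for the compact-open topology, whose
   basic neighbourhoods of the identity are {g | |g x - x| < eps for |x| <= r} *)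
Definition discrete (G : aff -> Prop) : Prop :=
  exists r eps : R, 0 < r /\ 0 < eps /\
    forall g, G g -> (forall x, sqnorm x <= r -> sqnorm (aff_act g x - x) < eps) ->
      g = aff_id.

(* cocompact: R^n / G is compact, i.e. some closed ball meets every orbit *)
Definition cocompact (G : aff -> Prop) : Prop :=
  exists r : R, forall x, exists g, G g /\ sqnorm (aff_act g x) <= r.

Definition torsion_free (G : aff -> Prop) : Prop :=
  forall g k, G g -> (0 < k)%N -> aff_pow g k = aff_id -> g = aff_id.

Definition Bieberbach (G : aff -> Prop) : Prop :=
  (forall g, G g -> is_isometry g) /\ discrete G /\ cocompact G /\ torsion_free G.

Definition isomorphic (G H : aff -> Prop) : Prop :=
  exists f : aff -> aff,
    (forall g, G g -> H (f g)) /\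
    (forall g h, G g -> G h -> f (aff_mul g h) = aff_mul (f g) (f h)) /\
    (forall g h, G g -> G h -> f g = f h -> g = h) /\
    (forall h, H h -> exists g, G g /\ f g = h).

(* Parameters c_{ji}, 1 <= j < i <= n-1, written 0-based: j' = j-1, i' = i-1,
   so 0 <= j' < i' <= n-2.  [true] stands for 1/2, [false] for 0. *)
Definition idx_ok (p : 'I_n * 'I_n) : bool := (p.1 < p.2)%N && (p.2.+1 < n)%N.
Definition Param := {ffun {p : 'I_n * 'I_n | idx_ok p} -> bool}.

Definition cval (c : Param) (j i : 'I_n) : R :=
  if @insub _ idx_ok {p : 'I_n * 'I_n | idx_ok p} (j, i) is Some p
  then (if c p then 2^-1 else 0) else 0.

Definition evec (k : 'I_n) : 'cV[R]_n := \col_l (l == k)%:R.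

Definition Cmat (i : 'I_n) : 'M[R]_n :=
  \matrix_(k, l) (if k == l then (if k == i then -1 else 1) else 0).

Definition cvec (c : Param) (i : 'I_n) : 'cV[R]_n :=
  \col_k (if (k : nat) == i.+1 then 2^-1 else if (k < i)%N then cval c k i else 0).

Definition Kgens (c : Param) (g : aff) : Prop :=
  (exists i : 'I_n, (i.+1 < n)%N /\ g = lin_transl (Cmat i) (cvec c i)) \/
  (exists j : 'I_n, g = transl (evec j)).

Definition Kgroup (c : Param) : aff -> Prop := generated (Kgens c).

End Defs.

From HB Require Import structures.
From mathcomp Require Import all_boot all_order all_algebra.
From mathcomp Require Import reals.
From mathcomp Require Import ring lra zify.
Set Implicit Arguments. Unset Strict Implicit. Unset Printing Implicit Defensive.

(* Every element of the group generated by the a_i = C_i L_{c_i} and the unit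
   translations is an affine map x |-> D_s x + t, where D_s is the diagonal sign
   matrix flipping a set s of coordinates among the first n - 1, and
   t = \sum_(i in s) c_i modulo Z^n.  This normal form gives the Bieberbach
   properties: the translations of the group are exactly Z^n, and when s is
   nonempty with largest element m, coordinate m + 1 is fixed by D_s but shifted
   by 1/2, which rules out torsion.
   For the classification, Z^n is intrinsically the set of elements commuting
   with all squares, so an isomorphism f acts on it by an integral matrix W.
   The relations e_i a_i e_i = a_i and a_j e_k = e_k a_j (j <> k) link the
   coordinates flipped by f(a_j) to the nonzero entries of W, and a descending
   induction shows that f(a_i) flips exactly coordinate i.  Comparing
   f(a_i^2) = W (2 c_i) coordinatewise then gives c_i = c'_i modulo Z^n. *)

Lemma sum_ord_ltn n b : (b <= n)%N -> (\sum_(a < n) (a < b))%N = b.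
Proof.
move=> hb; rewrite -(big_mkord xpredT (fun a => nat_of_bool (a < b)%N)).
rewrite (@big_cat_nat _ _ _ b 0 n) //= [X in (_ + X)%N]big1_seq ?addn0.
  rewrite (eq_big_seq (fun _ => 1%N)) ?sum1_size ?size_iota ?subn0 // => i.
  by rewrite mem_index_iota => /andP[_ ->].
by move=> i /andP[_]; rewrite mem_index_iota => /andP[/leq_gtF ->].
Qed.

Lemma card_Param n : (2 <= n)%N -> #|{: Param n}| = 2 ^ ((n.-1 * n.-2) %/ 2).
Proof.
move=> hn; rewrite card_ffun card_bool card_sig; congr (_ ^ _).
rewrite divn2 -bin2 -bin2_sum -sum1_card big_mkcond /=.
rewrite -(pair_bigA _ (fun a b => if idx_ok (a, b) then 1%N else 0%N)) /= exchange_big /=.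
rewrite (eq_bigr (fun b : 'I_n => if (b.+1 < n)%N then nat_of_ord b else 0%N)); last first.
  move=> b _; rewrite /idx_ok /=; case: ifP => _; last first.
    by rewrite big1 // => a _; rewrite andbF.
  rewrite -[RHS](sum_ord_ltn (ltnW (ltn_ord b))).
  by apply: eq_bigr => a _; rewrite andbT; case: (a < b)%N.
case: n hn => [//|m] _ /=.
rewrite -(big_mkord xpredT (fun b => if (b.+1 < m.+1)%N then b else 0%N)).
rewrite big_nat_recr //= ltnn addn0.
by apply: eq_big_nat => i /andP[_ h]; rewrite ltnS h.
Qed.

Import Order.TTheory GRing.Theory Num.Theory.
Local Open Scope ring_scope.

Section IntFacts.
Variable R : archiRealFieldType.
Implicit Types x y : R.

Lemma int_sqr_lt1 x : x \is a Num.int -> x ^+ 2 < 1 -> x = 0.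
Proof.
move=> xZ x2; apply/eqP; apply: contraTT x2 => x0.
by rewrite -leNgt sqr_intr_ge1.
Qed.

Lemma half_notin_int : (2^-1 : R) \isn't a Num.int.
Proof. by apply/negP => /int_sqr_lt1 h; have := h ltac:(lra); lra. Qed.

Lemma int_mul_eq1 x y : x \is a Num.int -> y \is a Num.int -> x * y = 1 ->
  x = 1 \/ x = -1.
Proof.
move=> xZ yZ xy1.
have [x0 y0] : x != 0 /\ y != 0.
  by split; apply: contra_eq_neq xy1 => ->; rewrite ?mul0r ?mulr0 eq_sym oner_neq0.
have x2 := sqr_intr_ge1 xZ x0; have y2 := sqr_intr_ge1 yZ y0.
have x2y2 : x ^+ 2 * y ^+ 2 = 1 by rewrite -exprMn xy1 expr1n.
have /eqP : (x - 1) * (x + 1) = 0 by nra.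
by rewrite mulf_eq0 => /orP[] /eqP ?; [left|right]; lra.
Qed.

Lemma signr_half_int (b : bool) x : 2 * x \is a Num.int ->
  (-1) ^+ b * x - x \is a Num.int.
Proof.
case: b => x2Z; last by rewrite expr0 mul1r subrr int_num0.
by rewrite expr1 mulN1r -opprD -mulr2n -mulr_natl rpredN.
Qed.

End IntFacts.

Section SignMatrices.
Variables (R : numDomainType) (n : nat).
Implicit Types s : 'I_n -> bool.

Definition signmx s : 'M[R]_n := diag_mx (\row_k (-1) ^+ s k).

Lemma signmxE s i j : signmx s i j = (-1) ^+ s i *+ (i == j).
Proof. by rewrite !mxE. Qed.

Lemma mul_signmxE s p (A : 'M[R]_(n, p)) i j :
  (signmx s *m A) i j = (-1) ^+ s i * A i j.
Proof. by rewrite mul_diag_mx !mxE. Qed.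

Lemma signmx_mul s s' : signmx s *m signmx s' = signmx (fun k => s k (+) s' k).
Proof.
by apply/matrixP => i j; rewrite mul_signmxE !signmxE mulrnAr signr_addb.
Qed.

Lemma signmx0 : signmx xpred0 = 1%:M.
Proof. by apply/matrixP => i j; rewrite signmxE mxE. Qed.

Lemma signmx_eq s s' : s =1 s' -> signmx s = signmx s'.
Proof. by move=> ss'; apply/matrixP => i j; rewrite !signmxE ss'. Qed.

Lemma signmxK s : signmx s *m signmx s = 1%:M.
Proof. by rewrite signmx_mul -signmx0; apply: signmx_eq => k; rewrite addbb. Qed.

Lemma tr_signmx s : (signmx s)^T = signmx s.
Proof. exact: tr_diag_mx. Qed.

Lemma invmx_signmx s : invmx (signmx s) = signmx s.
Proof.
have [sU _] := mulmx1_unit (signmxK s).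
by rewrite -[LHS]mulmx1 -(signmxK s) mulKmx.
Qed.

Lemma signmx_inj s s' : signmx s = signmx s' -> s =1 s'.
Proof.
move=> /matrixP ss' k; have := ss' k k; rewrite !signmxE eqxx !mulr1n.
exact: signr_inj.
Qed.

Lemma signr_eqN1 (b : bool) : ((-1) ^+ b == -1 :> R) = b.
Proof.
apply/eqP/idP => [|->]; last by rewrite expr1.
by case: b => // /(@signr_inj R false true).
Qed.

End SignMatrices.

Section AffineMaps.
Variables (R : realType) (n : nat).
Implicit Types a b v : 'cV[R]_n.

Lemma transl_mul a b : aff_mul (transl a) (transl b) = transl (a + b).
Proof. by rewrite /aff_mul /transl /= !mul1mx addrC. Qed.

Lemma transl_inv a : aff_inv (transl a) = transl (- a).
Proof. by rewrite /aff_inv /transl /= invmx1 mul1mx. Qed.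

Lemma transl0 : transl 0 = aff_id R n.
Proof. by []. Qed.

Lemma aff_mul_id : aff_mul (aff_id R n) (aff_id R n) = aff_id R n.
Proof. by rewrite /aff_mul /aff_id /= mul1mx mulmx0 addr0. Qed.

Lemma int_cV_ind (P : 'cV[R]_n -> Prop) :
  P 0 -> (forall a b, P a -> P b -> P (a + b)) -> (forall a, P a -> P (- a)) ->
  (forall k, P (evec R k)) -> forall v, (forall k, v k 0 \is a Num.int) -> P v.
Proof.
move=> P0 PD PN Pe v vZ.
have Pnat (m : nat) k : P (m%:R *: evec R k).
  elim: m => [|m IH]; first by rewrite scale0r.
  by rewrite mulrS scalerDl scale1r; apply: PD.
have Pint (z : int) k : P (z%:~R *: evec R k).
  by case: z => m; rewrite ?NegzE ?mulrNz ?scaleNr; [|apply: PN]; exact: Pnat.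
have -> : v = \sum_k v k 0 *: evec R k.
  apply/matrixP => i j; rewrite (ord1 j) summxE (bigD1 i) //= big1 ?addr0.
    by rewrite !mxE eqxx mulr1.
  by move=> k /negbTE ki; rewrite !mxE eq_sym ki mulr0.
apply: (big_ind P) => // k _.
by have /intrP [z ->] := vZ k; exact: Pint.
Qed.

Lemma sqr_le_sqnorm v (k : 'I_n) : v k 0 ^+ 2 <= sqnorm v.
Proof. by rewrite /sqnorm (bigD1 k) //= lerDl sumr_ge0 // => i _; exact: sqr_ge0. Qed.

Lemma sqnorm0 : @sqnorm R n 0 = 0.
Proof. by rewrite /sqnorm big1 // => i _; rewrite mxE expr0n. Qed.

Lemma sqnorm_evec (k : 'I_n) : sqnorm (evec R k) = 1.
Proof.
rewrite /sqnorm (bigD1 k) //= big1 ?addr0; first by rewrite mxE eqxx expr1n.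
by move=> i /negbTE ik; rewrite mxE ik expr0n.
Qed.

Lemma act_signmxE s t v k :
  aff_act (signmx R s, t) v k 0 = (-1) ^+ s k * v k 0 + t k 0.
Proof. by rewrite /aff_act mxE mul_signmxE. Qed.

End AffineMaps.

Section NormalForm.
Variables (R : realType) (n : nat) (c : Param n).
Local Notation isint x := (x \is a @Num.int R).
Implicit Types (s : 'I_n -> bool) (g h : aff R n) (i j k l m : 'I_n).

Lemma cvec_half m k : cvec R c m k 0 = 2^-1 \/ cvec R c m k 0 = 0.
Proof.
rewrite mxE; case: ifP => _; first by left.
case: ifP => _; last by right.
by rewrite /cval; case: insub => [p|]; [case: (c p)|]; [left|right|right].
Qed.

Lemma cvec_double_int m k : isint (2 * cvec R c m k 0).
Proof.
by case: (cvec_half m k) => ->; rewrite ?mulr0 ?int_num0 // mulfV ?int_num1 ?pnatr_eq0.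
Qed.

Lemma Cmat_signmx i : Cmat R i = signmx R (pred1 i).
Proof.
by apply/matrixP => k l; rewrite signmxE !mxE /=; case: (k == l); case: (k == i).
Qed.

Lemma Cmat_cvec i : Cmat R i *m cvec R c i = cvec R c i.
Proof.
apply/matrixP => k l; rewrite Cmat_signmx mul_signmxE /=.
case: eqP => [->|_]; last by rewrite mul1r.
by rewrite (ord1 l) !mxE (ltn_eqF (ltnSn i)) ltnn mulr0.
Qed.

Lemma Cmat_evec j k :
  Cmat R j *m evec R k = if j == k then - evec R k else evec R k.
Proof.
apply/matrixP => l m; rewrite Cmat_signmx mul_signmxE /=.
case: (eqVneq j k) => [<-|jk]; rewrite !mxE.
  by case: (l == j); rewrite ?expr1 ?mulN1r ?mulr0 ?oppr0.
by case: (eqVneq l j) => [->|_]; rewrite ?(negbTE jk) ?mulr0 ?expr0 ?mul1r.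
Qed.

(* The translation part of an element with linear part [signmx s] is
   [\sum_(m in s) c_m] modulo the integers. *)
Definition cshift s k : R := \sum_m (s m)%:R * cvec R c m k 0.

Definition normal_form g : Prop := exists s,
  [/\ forall k, s k -> (k.+1 < n)%N, g.1 = signmx R s &
      forall k, isint (g.2 k 0 - cshift s k)].

Lemma cshift_eq s s' k : s =1 s' -> cshift s k = cshift s' k.
Proof. by move=> ss'; apply: eq_bigr => m _; rewrite ss'. Qed.

Lemma cshift0 s k : s =1 xpred0 -> cshift s k = 0.
Proof. by move=> s0; rewrite /cshift big1 // => m _; rewrite s0 mul0r. Qed.

Lemma cshift1 i k : cshift (pred1 i) k = cvec R c i k 0.
Proof.
rewrite /cshift (bigD1 i) //= eqxx mul1r big1 ?addr0 // => m /negbTE mi.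
by rewrite /= mi mul0r.
Qed.

Lemma cshift_double_int s k : isint (2 * cshift s k).
Proof.
rewrite /cshift mulr_sumr; apply: rpred_sum => m _.
by rewrite mulrCA rpredM ?natr_int ?cvec_double_int.
Qed.

Lemma cshift_addb s s' k :
  isint (cshift s k + cshift s' k - cshift (fun m => s m (+) s' m) k).
Proof.
have -> : cshift s k + cshift s' k - cshift (fun m => s m (+) s' m) k =
    \sum_m (s m && s' m)%:R * (2 * cvec R c m k 0).
  rewrite /cshift -big_split -sumrB /=; apply: eq_bigr => m _.
  by case: (s m); case: (s' m) => /=; ring.
by apply: rpred_sum => m _; rewrite rpredM ?natr_int ?cvec_double_int.
Qed.

(* Only [c_m] with [m] the largest index of [s] reaches coordinate [m + 1]. *)
Lemma cshift_above s (m l : 'I_n) : (forall j, s j -> (j <= m)%N) ->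
  l = m.+1 :> nat -> cshift s l = (s m)%:R * 2^-1.
Proof.
move=> sm lm; rewrite /cshift (bigD1 m) //= big1 ?addr0.
  by rewrite mxE lm eqxx.
move=> j jm; case sj: (s j); last by rewrite mul0r.
rewrite mxE lm eqSS val_eqE eq_sym (negbTE jm) ltnNge (leq_trans (sm j sj)) ?mulr0 //.
Qed.

Lemma normal_form_id : normal_form (aff_id R n).
Proof.
exists xpred0; split => //; first by rewrite signmx0.
by move=> k; rewrite cshift0 // mxE subr0 int_num0.
Qed.

Lemma normal_form_gen g : Kgens c g -> normal_form g.
Proof.
case=> [[i [i_lt ->]]|[j ->]].
  exists (pred1 i); split; first by move=> k /eqP ->.
    by rewrite /= Cmat_signmx.
  by move=> k; rewrite /= Cmat_cvec cshift1 subrr int_num0.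
exists xpred0; split => //; first by rewrite signmx0.
by move=> k; rewrite cshift0 // subr0 /= mxE natr_int.
Qed.

Lemma normal_form_mul g h : normal_form g -> normal_form h -> normal_form (aff_mul g h).
Proof.
case: g h => D t [D' t'] [s [sn /= -> tZ]] [s' [s'n /= -> t'Z]].
exists (fun k => s k (+) s' k); split => /=.
- by move=> k; case: (s k) (sn k) (s'n k); case: (s' k) => //= _ ->.
- by rewrite signmx_mul.
move=> k; rewrite mxE mul_signmxE.
have -> : (-1) ^+ s k * t' k 0 + t k 0 - cshift (fun m => s m (+) s' m) k =
  (-1) ^+ s k * (t' k 0 - cshift s' k) + (t k 0 - cshift s k) +
  ((-1) ^+ s k * cshift s' k - cshift s' k) +
  (cshift s k + cshift s' k - cshift (fun m => s m (+) s' m) k) by ring.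
apply: rpredD; last exact: cshift_addb.
apply: rpredD; last exact/signr_half_int/cshift_double_int.
by apply: rpredD; rewrite ?rpredMsign.
Qed.

Lemma normal_form_inv g : normal_form g -> normal_form (aff_inv g).
Proof.
case: g => D t [s [sn /= -> tZ]].
exists s; split => //=; first by rewrite invmx_signmx.
move=> k; rewrite invmx_signmx mxE mul_signmxE.
have -> : - ((-1) ^+ s k * t k 0) - cshift s k =
  - ((-1) ^+ s k * (t k 0 - cshift s k)) - ((-1) ^+ s k * cshift s k - cshift s k)
  - 2 * cshift s k by ring.
apply: rpredB; last exact: cshift_double_int.
by rewrite rpredB ?rpredN ?rpredMsign ?signr_half_int ?cshift_double_int.
Qed.

Lemma Kgroup_normal_form g : Kgroup c g -> normal_form g.
Proof.
elim=> {g} [g /normal_form_gen //| |g h _ ? _ ?|g _ ?].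
- exact: normal_form_id.
- exact: normal_form_mul.
- exact: normal_form_inv.
Qed.

Lemma Kgroup_evec k : Kgroup c (transl (evec R k)).
Proof. by apply: gen_base; right; exists k. Qed.

Lemma Kgroup_transl (v : 'cV[R]_n) : (forall k, isint (v k 0)) -> Kgroup c (transl v).
Proof.
apply: (int_cV_ind (P := fun v => Kgroup c (transl v))).
- exact: gen_id.
- by move=> a b ha hb; rewrite -transl_mul; apply: gen_mul.
- by move=> a ha; rewrite -transl_inv; apply: gen_inv.
- exact: Kgroup_evec.
Qed.

Lemma Kgroup_transl_int g : Kgroup c g -> g.1 = 1%:M -> forall k, isint (g.2 k 0).
Proof.
move=> /Kgroup_normal_form [s [_ g1 tZ]] /esym; rewrite g1 -signmx0 => /signmx_inj s0 k.
by have := tZ k; rewrite cshift0 ?subr0.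
Qed.

End NormalForm.

Section Bieberbach.
Variables (R : realType) (n : nat) (c : Param n).
Implicit Types (g : aff R n) (s : 'I_n -> bool) (t : 'cV[R]_n) (l : 'I_n).
Local Notation G := (@Kgroup R n c).

Lemma Kgroup_isometry g : G g -> is_isometry g.
Proof.
by move=> /Kgroup_normal_form [s [_ g1 _]]; rewrite /is_isometry g1 tr_signmx signmxK.
Qed.

Lemma Kgroup_discrete : discrete G.
Proof.
exists 1, 4^-1; split; first lra; split; first lra.
move=> [D t] g small; have [s [_ /= D_s tZ]] := Kgroup_normal_form g; subst D.
have t_small k : t k 0 ^+ 2 < 4^-1.
  apply: le_lt_trans (sqr_le_sqnorm t k) _.
  by have := small 0; rewrite sqnorm0 /aff_act /= mulmx0 add0r subr0; apply; lra.
case: (pickP s) => [k sk|s0].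
  have e_ok : sqnorm (evec R k) <= 1 by rewrite sqnorm_evec.
  have := le_lt_trans (sqr_le_sqnorm _ k) (small _ e_ok).
  rewrite mxE act_signmxE sk !mxE eqxx /= expr1 mulr1 => too_close.
  by exfalso; have := t_small k; nra.
rewrite /aff_id (@signmx_eq _ _ s xpred0) // signmx0; congr pair.
apply/matrixP => k j; rewrite (ord1 j) mxE; apply: int_sqr_lt1.
  by have := tZ k; rewrite cshift0 ?subr0.
by have := t_small k; lra.
Qed.

Lemma Kgroup_cocompact : cocompact G.
Proof.
exists n%:R => x; pose v : 'cV[R]_n := \col_k (Num.floor (x k 0))%:~R.
exists (transl (- v)); split.
  by apply: Kgroup_transl => k; rewrite !mxE rpredN intr_int.
apply: (@le_trans _ _ (\sum_(k < n) (1 : R))); last by rewrite sumr_const card_ord.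
apply: ler_sum => k _; rewrite /aff_act /transl /= mul1mx !mxE.
have := floor_le (x k 0); have := floorD1_gt (x k 0); rewrite intrD; nra.
Qed.

Lemma aff_pow_fixed_coord s t l j : ~~ s l ->
  (aff_pow (signmx R s, t) j).2 l 0 = j%:R * t l 0.
Proof.
move=> /negbTE sl; elim: j => [|j IH]; first by rewrite /= mxE mul0r.
by rewrite /= mxE mul_signmxE sl expr0 mul1r -/(aff_pow _ j) IH mulrS; ring.
Qed.

Lemma Kgroup_torsion_free : torsion_free G.
Proof.
move=> [D t] k g k_gt0 gk; have [s [sn /= D_s tZ]] := Kgroup_normal_form g; subst D.
have t0 l : ~~ s l -> t l 0 = 0.
  move=> sl; have /eqP := congr1 (fun g : aff R n => g.2 l 0) gk.
  by rewrite /= aff_pow_fixed_coord // mxE mulf_eq0 pnatr_eq0 eqn0Ngt k_gt0 => /eqP.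
case: (pickP s) => [i si|s0]; last first.
  rewrite /aff_id (@signmx_eq _ _ s xpred0) // signmx0; congr pair.
  by apply/matrixP => a b; rewrite (ord1 b) t0 ?s0 // mxE.
have [m sm m_max] := @arg_maxnP _ i s (fun j : 'I_n => nat_of_ord j) si.
pose l := Ordinal (sn m sm).
have sl : ~~ s l by apply/negP => /m_max /=; rewrite ltnn.
have := tZ l; rewrite t0 // (@cshift_above _ _ _ s m l) // sm mul1r sub0r rpredN.
by rewrite (negbTE (half_notin_int R)).
Qed.

Lemma Kgroup_Bieberbach : Bieberbach G.
Proof.
split; first exact: Kgroup_isometry.
split; first exact: Kgroup_discrete.
split; [exact: Kgroup_cocompact | exact: Kgroup_torsion_free].
Qed.

End Bieberbach.

Section Generators.
Variables (R : realType) (n : nat) (c : Param n).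
Local Notation G := (@Kgroup R n c).
Implicit Types (g h : aff R n) (i j k : 'I_n).

Definition Kgen i : aff R n := lin_transl (Cmat R i) (cvec R c i).

Lemma KgenE i : Kgen i = (Cmat R i, cvec R c i).
Proof. by rewrite /Kgen /lin_transl Cmat_cvec. Qed.

Lemma Kgroup_Kgen i : (i.+1 < n)%N -> G (Kgen i).
Proof. by move=> i_lt; apply: gen_base; left; exists i. Qed.

Lemma Kgen_sqr i : aff_mul (Kgen i) (Kgen i) = transl (cvec R c i + cvec R c i).
Proof. by rewrite KgenE /aff_mul /= Cmat_cvec Cmat_signmx signmxK. Qed.

Lemma Kgen_conj_evec i :
  aff_mul (transl (evec R i)) (aff_mul (Kgen i) (transl (evec R i))) = Kgen i.
Proof.
rewrite KgenE /aff_mul /transl /= mulmx1 mul1mx Cmat_evec eqxx.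
by rewrite mul1mx addrAC addNr add0r.
Qed.

Lemma Kgen_comm_evec j k : j != k ->
  aff_mul (Kgen j) (transl (evec R k)) = aff_mul (transl (evec R k)) (Kgen j).
Proof.
move=> jk; rewrite KgenE /aff_mul /transl /= mulmx1 !mul1mx Cmat_evec.
by rewrite (negbTE jk) addrC.
Qed.

(* An element flipping coordinate [k] does not commute with the square of
   [transl (evec R k)]. *)
Lemma Kgroup_transl_iff g : G g ->
  g.1 = 1%:M <-> forall h, G h -> aff_mul g (aff_mul h h) = aff_mul (aff_mul h h) g.
Proof.
move=> Gg; split.
  case: g Gg => D t _ /= -> [M u] /Kgroup_normal_form [s [_ /= -> _]].
  by rewrite /aff_mul /= signmxK !mul1mx addrC.
move=> comm; have [s [_ g1 _]] := Kgroup_normal_form Gg.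
suff s0 : s =1 xpred0 by rewrite g1 (@signmx_eq _ _ s xpred0) // signmx0.
move=> k; apply/negbTE/negP => sk.
have := comm _ (Kgroup_evec R c k); rewrite transl_mul; case: g {Gg comm} g1 => D t /= ->.
move=> /(congr1 (fun g : aff R n => g.2 k 0)) /=.
by rewrite mul1mx [in LHS]mxE mul_signmxE !mxE eqxx sk expr1 /=; lra.
Qed.

End Generators.

Section Isomorphism.
Variables (R : realType) (n : nat) (c c' : Param n) (f : aff R n -> aff R n).
Local Notation isint x := (x \is a @Num.int R).
Local Notation G := (@Kgroup R n c).
Local Notation G' := (@Kgroup R n c').
Hypothesis fG : forall g, G g -> G' (f g).
Hypothesis fM : forall g h, G g -> G h -> f (aff_mul g h) = aff_mul (f g) (f h).
Hypothesis f_inj : forall g h, G g -> G h -> f g = f h -> g = h.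
Hypothesis f_surj : forall h, G' h -> exists g, G g /\ f g = h.
Implicit Types (g h : aff R n) (i j k l : 'I_n).

Lemma iso_id : f (aff_id R n) = aff_id R n.
Proof.
have G1 : G (aff_id R n) := gen_id _.
have := fM G1 G1; rewrite aff_mul_id.
have [s [_ fid1 _]] := Kgroup_normal_form (fG G1).
case: (f _) fid1 => D t /= -> [D2 t2].
have D1 : signmx R s = 1%:M by rewrite [LHS]D2 signmxK.
suff -> : t = 0 by rewrite D1.
by move: t2; rewrite D1 mul1mx -{1}[t]add0r => /addIr.
Qed.

Lemma iso_transl_iff g : G g -> g.1 = 1%:M <-> (f g).1 = 1%:M.
Proof.
move=> Gg; rewrite (Kgroup_transl_iff Gg) (Kgroup_transl_iff (fG Gg)).
split=> comm.
  move=> _ /f_surj [h [Gh <-]]; have Ghh := gen_mul Gh Gh.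
  by rewrite -!fM ?comm //; apply: gen_mul.
move=> h Gh; have Ghh := gen_mul Gh Gh.
apply: f_inj; try by apply: gen_mul.
by rewrite !fM // comm //; apply: fG.
Qed.

Definition we k : 'cV[R]_n := (f (transl (evec R k))).2.

Lemma f_transl_evec k : f (transl (evec R k)) = transl (we k).
Proof.
have := (iso_transl_iff (Kgroup_evec R c k)).1 erefl.
by rewrite /we; case: (f _) => M u /= ->.
Qed.

Definition Wmx : 'M[R]_n := \matrix_(l, k) we k l 0.

Lemma Wmx_evec k : Wmx *m evec R k = we k.
Proof.
apply/matrixP => l j; rewrite (ord1 j) !mxE (bigD1 k) //= big1 ?addr0.
  by rewrite !mxE eqxx mulr1.
by move=> m /negbTE mk; rewrite !mxE mk mulr0.
Qed.

Lemma f_transl (v : 'cV[R]_n) :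
  (forall k, isint (v k 0)) -> f (transl v) = transl (Wmx *m v).
Proof.
move=> vZ; suff [] : G (transl v) /\ f (transl v) = transl (Wmx *m v) by [].
move: v vZ; apply: int_cV_ind.
- by rewrite mulmx0 transl0 iso_id; split => //; exact: gen_id.
- move=> a b [Ga fa] [Gb fb]; rewrite -transl_mul; split; first exact: gen_mul.
  by rewrite fM // fa fb transl_mul mulmxDr.
- move=> a [Ga fa]; rewrite -transl_inv; split; first exact: gen_inv.
  have := fM (gen_inv Ga) Ga; rewrite transl_inv transl_mul addNr transl0 iso_id fa.
  case: (f _) => M u; rewrite /aff_mul /aff_id /transl /= mulmx1 => -[<- ua].
  rewrite mul1mx in ua; rewrite mulmxN; congr pair.
  by apply/eqP; rewrite -addr_eq0 addrC -ua.
- by move=> k; rewrite Wmx_evec f_transl_evec; split => //; exact: Kgroup_evec.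
Qed.

Definition flips i l : bool := (f (Kgen R c i)).1 l l == -1.

Lemma f_Kgen_form i : (i.+1 < n)%N -> exists t,
  [/\ f (Kgen R c i) = (signmx R (flips i), t), forall k, flips i k -> (k.+1 < n)%N
    & forall k, isint (t k 0 - cshift R c' (flips i) k)].
Proof.
move=> i_lt; have [s [sn fs tZ]] := Kgroup_normal_form (fG (Kgroup_Kgen R c i_lt)).
have flips_s : flips i =1 s by move=> l; rewrite /flips fs signmxE eqxx signr_eqN1.
exists (f (Kgen R c i)).2; split.
- by rewrite (signmx_eq _ flips_s) -fs; case: (f _).
- by move=> k; rewrite flips_s; apply: sn.
- by move=> k; rewrite (cshift_eq _ _ k flips_s).
Qed.

Lemma flips_we j k l : (j.+1 < n)%N ->
  (-1) ^+ flips j l * we k l 0 = (-1) ^+ (j == k) * we k l 0.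
Proof.
move=> j_lt; have [t [fj _ _]] := f_Kgen_form j_lt.
have Gj := Kgroup_Kgen R c j_lt.
have [<-|jk] := eqVneq j k.
  have Gej := Kgroup_evec R c j; have := congr1 f (Kgen_conj_evec R c j).
  rewrite (fM Gej (gen_mul Gj Gej)) (fM Gj Gej) f_transl_evec fj.
  rewrite /aff_mul /transl /= !mul1mx => -[_ /(congr1 (fun v => v - t))].
  rewrite addrAC addrK subrr => /eqP; rewrite addr_eq0 => /eqP /matrixP /(_ l 0).
  by rewrite mul_signmxE mxE expr1 mulN1r.
have Gek := Kgroup_evec R c k; have := congr1 f (Kgen_comm_evec R c jk).
rewrite (fM Gj Gek) (fM Gek Gj) f_transl_evec fj.
rewrite /aff_mul /transl /= !mul1mx [t + _]addrC => -[_ /addIr /matrixP /(_ l 0)].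
by rewrite mul_signmxE => ->; rewrite /= expr0 mul1r.
Qed.

(* Coordinate [l] of the image behaves under the generators like coordinate [k]. *)
Definition flipped_as k l : Prop := forall j, (j.+1 < n)%N -> flips j l = (j == k).

Lemma flipped_as_we k l : we k l 0 != 0 -> flipped_as k l.
Proof.
by move=> wkl j j_lt; apply: (@signr_inj R); apply: (mulIf wkl); exact: flips_we.
Qed.

Lemma flipped_as_inj k k' l : flipped_as k l -> flipped_as k' l -> k = k'.
Proof.
move=> kl k'l; have [k_lt|k_ge] := ltnP k.+1 n.
  by apply/eqP; rewrite -(k'l k k_lt) kl // eqxx.
have [k'_lt|k'_ge] := ltnP k'.+1 n.
  by apply/esym/eqP; rewrite -(kl k' k'_lt) k'l // eqxx.
by apply: ord_inj; have := ltn_ord k; have := ltn_ord k'; lia.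
Qed.

Lemma we_int k l : isint (we k l 0).
Proof.
have Gk := Kgroup_evec R c k.
exact: Kgroup_transl_int (fG Gk) ((iso_transl_iff Gk).1 erefl) l.
Qed.

Lemma we_row_sum l : exists2 x : 'cV[R]_n,
  forall k, isint (x k 0) & \sum_k we k l 0 * x k 0 = 1.
Proof.
have elZ k : isint (evec R l k 0) by rewrite mxE natr_int.
have [[M u] [Gx fx]] := f_surj (Kgroup_transl c' elZ).
have M1 : M = 1%:M by apply/(iso_transl_iff Gx); rewrite fx.
subst M; have uZ := Kgroup_transl_int Gx erefl.
exists u => //; move: fx; rewrite (f_transl uZ) => -[/matrixP /(_ l 0)].
rewrite !mxE eqxx => e; rewrite -[1]/(true%:R) -e.
by apply: eq_bigr => k _; rewrite mxE.
Qed.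

Lemma we_row l : exists k, [/\ flipped_as k l, we k l 0 = 1 \/ we k l 0 = -1
  & forall k', k' != k -> we k' l 0 = 0].
Proof.
have [x xZ x_sum] := we_row_sum l.
have [k wx] : exists k, we k l 0 * x k 0 != 0.
  apply/existsP; apply: contra_eqT x_sum => /existsPn all0.
  by rewrite big1 ?(eq_sym 0) ?oner_neq0 // => k _; apply/eqP/negbNE/all0.
have kl : flipped_as k l.
  by apply: flipped_as_we; move: wx; rewrite mulf_eq0 negb_or => /andP[].
have w0 k' : k' != k -> we k' l 0 = 0.
  move=> k'k; apply/eqP; apply: contraNT k'k => /flipped_as_we k'l.
  by rewrite (flipped_as_inj k'l kl).
exists k; split => //; apply: (int_mul_eq1 (we_int k l) (xZ k)).
by rewrite -x_sum (bigD1 k) //= big1 ?addr0 // => k' /w0 ->; rewrite mul0r.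
Qed.

(* On a coordinate [l] not flipped by [f (Kgen i)], the identity
   [f (Kgen i)^2 = transl (Wmx *m 2 c_i)] makes the shift of [f (Kgen i)] equal
   to [+-(c_i)_k]. *)
Lemma Kgen_sqr_congr i k l : (i.+1 < n)%N -> flipped_as k l -> ~~ flips i l ->
  isint (cvec R c i k 0 - cshift R c' (flips i) l).
Proof.
move=> i_lt kl il; have [t [fi _ tZ]] := f_Kgen_form i_lt.
have cZ m : isint ((cvec R c i + cvec R c i) m 0).
  by rewrite mxE -mulr2n -mulr_natl cvec_double_int.
have Gi := Kgroup_Kgen R c i_lt; have := fM Gi Gi.
rewrite Kgen_sqr f_transl // fi /aff_mul /transl /= => -[_ /matrixP /(_ l 0) e2].
rewrite [RHS]mxE mul_signmxE (negbTE il) expr0 mul1r in e2.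
have [k' [k'l wl w0]] := we_row l; rewrite -(flipped_as_inj k'l kl).
have Wl : (Wmx *m (cvec R c i + cvec R c i)) l 0 = we k' l 0 * (2 * cvec R c i k' 0).
  rewrite mxE (bigD1 k') //= big1 ?addr0 => [|m mk]; last by rewrite mxE w0 // mul0r.
  by rewrite [Wmx _ _]mxE [fun_of_matrix (_ + _) _ _]mxE; ring.
rewrite Wl in e2; have -> : cvec R c i k' 0 - cshift R c' (flips i) l =
  (cvec R c i k' 0 - t l 0) + (t l 0 - cshift R c' (flips i) l) by ring.
rewrite rpredD ?tZ //.
case: wl => w_pm; rewrite w_pm in e2.
  by rewrite (_ : _ - _ = 0) ?rpred0 //; lra.
by rewrite (_ : _ - _ = 2 * cvec R c i k' 0) ?cvec_double_int //; lra.
Qed.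

Lemma flipped_as_diag_step l :
  (forall l' : 'I_n, (l < l')%N -> flipped_as l' l') -> flipped_as l l.
Proof.
move=> IH; have [l_lt|l_ge] := ltnP l.+1 n; last first.
  move=> j j_lt; have [_ [_ jn _]] := f_Kgen_form j_lt.
  apply/idP/eqP => [/jn|jl]; first by rewrite ltnNge l_ge.
  by move: j_lt; rewrite jl ltnNge l_ge.
pose l1 := Ordinal l_lt.
have l1l1 : flipped_as l1 l1 := IH l1 (ltnSn l).
have l_not_l1 : ~~ flips l l1.
  by rewrite (l1l1 l l_lt) -val_eqE /= (ltn_eqF (ltnSn l)).
have := Kgen_sqr_congr l_lt l1l1 l_not_l1.
rewrite (@cshift_above R n c' (flips l) l l1) //; last first.
  move=> j; apply: contraTT; rewrite -ltnNge => lj.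
  by rewrite (IH j lj l l_lt) -val_eqE /= (ltn_eqF lj).
rewrite mxE /= eqxx; have [ll|] := boolP (flips l l); last first.
  by rewrite mul0r subr0 (negbTE (half_notin_int R)).
have [k [kl _ _]] := we_row l.
have /eqP lk : l == k by rewrite -(kl l l_lt).
by rewrite {1}lk.
Qed.

Lemma flipped_as_diag l : flipped_as l l.
Proof.
have [d] := ubnP (n - l); elim: d l => // d IH l l_d.
apply: flipped_as_diag_step => l' ll'; apply: IH.
by have := ltn_ord l'; lia.
Qed.

Lemma iso_param_eq : c = c'.
Proof.
apply/ffunP => -[[k i] p]; have /andP [/= ki i_lt] := p.
have flips_i : flips i =1 pred1 i.
  by move=> m; rewrite (@flipped_as_diag m i i_lt) eq_sym.
have k_not_i : ~~ flips i k by rewrite flips_i /= -val_eqE /= (ltn_eqF ki).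
have := Kgen_sqr_congr i_lt (@flipped_as_diag k) k_not_i.
rewrite (cshift_eq _ _ _ flips_i) cshift1 !mxE ki.
rewrite (ltn_eqF (ltn_trans ki (ltnSn i))) /cval (insubT (@idx_ok n) p) /=.
case: (c _); case: (c' _); rewrite ?subrr ?int_num0 //.
- by rewrite subr0 (negbTE (half_notin_int R)).
- by rewrite sub0r rpredN (negbTE (half_notin_int R)).
Qed.

End Isomorphism.

Local Close Scope ring_scope.

Theorem corollary4p5 (R : realType) (n : nat) (hn : (2 <= n)%N) :
  #|{: Param n}| = 2 ^ ((n.-1 * n.-2) %/ 2) /\
  (forall c : Param n, Bieberbach (@Kgroup R n c)) /\
  (forall c c' : Param n, c != c' -> ~ isomorphic (@Kgroup R n c) (@Kgroup R n c')).
Proof.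
split; first exact: card_Param.
split=> [c|c c' c_neq [f [fG [fM [f_inj f_surj]]]]]; first exact: Kgroup_Bieberbach.
by move/eqP: c_neq; apply; exact: iso_param_eq fG fM f_inj f_surj.
Qed.
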